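(* Let $\delta\in(0,1)$ and let $T$ be a bounded operator on a Hilbert space $\mathcal{H}$ with $\overline{W(T)}\subseteq G_\delta$. Then for every $\omega\in\mathbb{T}$, $\|\Psi_\omega(T)\|\le1$. Moreover, for all $\omega\in\mathbb{T}$, $$\|\Psi_\omega\|_{\mathrm{bfd}}=1=\sup_{\lambda\in G_\delta}|\Psi_\omega(\lambda)|.$$
   Context: $G_\delta=\{x+iy: x,y\in\mathbb{R},\ \frac{x^2}{(1+\delta)^2}+\frac{y^2}{(1-\delta)^2}<1\}$. $W(T)=\{\langle Tx,x\rangle:\|x\|=1\}$ is the numerical range. For $\omega\in\mathbb{T}$, $\Psi_\omega(\lambda)=\frac{2\omega\delta-\lambda}{2-\omega\lambda}$ on $G_\delta$, and $\Psi_\omega(T)$ is defined by the Riesz–Dunford calculus (the spectrum of $T$ lies in $\overline{W(T)}$). For holomorphic $\phi$ on $G_\delta$, $\|\phi\|_{\mathrm{bfd}}=\sup\{\|\phi(T)\|: T \text{ a bounded Hilbert space operator with } \overline{W(T)}\subseteq G_\delta\}$. *)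

From HB Require Import structures.
From mathcomp Require Import all_boot all_order all_algebra.
From mathcomp Require Import all_classical all_reals all_analysis.
From mathcomp Require Import complex.
Set Implicit Arguments. Unset Strict Implicit. Unset Printing Implicit Defensive.
Import Order.TTheory GRing.Theory Num.Theory.
Import numFieldNormedType.Exports.
Local Open Scope ring_scope.
Local Open Scope classical_set_scope.

Definition is_inner_product (R : realType) (V : lmodType R[i])
    (ip : V -> V -> R[i]) : Prop :=
  [/\ (forall (a : R[i]) (x y z : V), ip (a *: x + y) z = a * ip x z + ip y z),
      (forall x y : V, ip x y = (ip y x)^*),
      (forall x : V, 0 <= ip x x) &
      (forall x : V, ip x x = 0 -> x = 0)].

Definition hnorm (R : realType) (V : lmodType R[i]) (ip : V -> V -> R[i])
    (x : V) : R := Num.sqrt (complex.Re (ip x x)).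

Definition ip_complete (R : realType) (V : lmodType R[i])
    (ip : V -> V -> R[i]) : Prop :=
  forall u : nat -> V,
    (forall e : R, 0 < e -> exists N : nat, forall m n : nat, (N <= m)%N -> (N <= n)%N ->
        hnorm ip (u m - u n) < e) ->
    exists l : V, forall e : R, 0 < e -> exists N : nat, forall n : nat, (N <= n)%N ->
        hnorm ip (u n - l) < e.

Definition is_hilbert (R : realType) (V : lmodType R[i]) (ip : V -> V -> R[i]) : Prop :=
  is_inner_product ip /\ ip_complete ip.

Definition bounded_op (R : realType) (V : lmodType R[i]) (ip : V -> V -> R[i])
    (T : V -> V) : Prop :=
  exists M : R, forall x : V, hnorm ip (T x) <= M * hnorm ip x.

Definition numrange (R : realType) (V : lmodType R[i]) (ip : V -> V -> R[i])
    (T : V -> V) : set R[i] :=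
  [set ip (T x) x | x in [set x : V | hnorm ip x = 1]].

Definition G_delta (R : realType) (delta : R) : set R[i] :=
  [set z : R[i] | (complex.Re z) ^+ 2 / (1 + delta) ^+ 2
                  + (complex.Im z) ^+ 2 / (1 - delta) ^+ 2 < 1].

Definition closW_in_G (R : realType) (delta : R) (V : lmodType R[i])
    (ip : V -> V -> R[i]) (T : V -> V) : Prop :=
  closure (numrange ip T : set R[i]^o) `<=` (G_delta delta : set R[i]^o).

Definition admissible (R : realType) (delta : R) (V : lmodType R[i])
    (ip : V -> V -> R[i]) (T : V -> V) : Prop :=
  [/\ is_hilbert ip, linear T, bounded_op ip T & closW_in_G delta ip T].

Definition Psi (R : realType) (delta : R) (omega lambda : R[i]) : R[i] :=
  (2 * omega * (delta%:C)%C - lambda) / (2 - omega * lambda).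

(* Psi_omega(T) = (2 omega delta - T)(2 - omega T)^{-1}: the value of the    *)
(* Riesz-Dunford calculus at the rational function Psi_omega, whose pole     *)
(* 2/omega lies outside the spectrum.  y is sent to (2 omega delta - T) x    *)
(* where x is the preimage of y under 2 - omega T.                           *)
Definition Psi_op (R : realType) (delta : R) (omega : R[i]) (V : lmodType R[i])
    (T : V -> V) : V -> V :=
  fun y => let x := xget 0 [set x : V | 2 *: x - omega *: T x = y] in
           (2 * omega * (delta%:C)%C) *: x - T x.

(* invertibility of 2 - omega T (needed for Psi_omega(T) to be defined) *)
Definition resolvent_ok (R : realType) (omega : R[i]) (V : lmodType R[i])
    (T : V -> V) : Prop :=
  bijective (fun x : V => 2 *: x - omega *: T x).

Definition opnorm (R : realType) (V : lmodType R[i]) (ip : V -> V -> R[i])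
    (A : V -> V) : \bar R :=
  ereal_sup [set ((hnorm ip (A y))%:E)%E | y in [set y : V | hnorm ip y <= 1]].

Definition bfd_norm_Psi (R : realType) (delta : R) (omega : R[i]) : \bar R :=
  ereal_sup [set r : \bar R | exists (V : lmodType R[i]) (ip : V -> V -> R[i])
                                     (T : V -> V),
               admissible delta ip T /\ r = opnorm ip (Psi_op delta omega T)].

Definition cmod (R : realType) (z : R[i]) : R :=
  Num.sqrt (complex.Re z ^+ 2 + complex.Im z ^+ 2).

Definition sup_Psi_G (R : realType) (delta : R) (omega : R[i]) : \bar R :=
  ereal_sup [set ((cmod (Psi delta omega lambda))%:E)%E
            | lambda in G_delta delta].

From HB Require Import structures.
From mathcomp Require Import all_boot all_order all_algebra.
From mathcomp Require Import all_classical all_reals all_analysis.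
From mathcomp Require Import complex.
From mathcomp Require Import ring lra.
Import Order.TTheory GRing.Theory Num.Theory.
Import numFieldNormedType.Exports.
Local Open Scope ring_scope.
Local Open Scope classical_set_scope.

(* For a unit vector x the point w = <Tx, x> lies in the ellipse G_delta, and
   ||(2 - omega T) x||^2 - ||(2 omega delta - T) x||^2
     = 4 (1 - delta^2) - 4 (Re (omega w) - delta Re (omega (conj w))).
   The subtracted term is a real linear functional of w, and its maximum over the
   ellipse (the support function) is exactly 1 - delta^2; so the numerator of
   Psi_omega(T) is dominated by its denominator.  The same ellipse gives
   |Re (omega w)| <= 1 + delta < 2, so Re <(2 - omega T) x, x> >= (1 - delta) ||x||^2:
   2 - omega T is coercive, hence injective, and surjective by Banach's fixed point
   theorem applied to x |-> x - t ((2 - omega T) x - y) for a small t > 0.  Therefore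
   ||Psi_omega(T)|| <= 1 for every admissible T.  Conversely, multiplication by
   lambda on C is admissible for each lambda in G_delta, with Psi_omega of it the
   multiplication by Psi_omega(lambda), and |Psi_omega(lambda)| tends to 1 along a
   ray towards the boundary point where the support bound is attained. *)

Local Notation Re := complex.Re.
Local Notation Im := complex.Im.

Lemma conjE (R : rcfType) (z : R[i]) : z^* = (z^*)%C.
Proof.
rewrite [z in LHS]Crect conjC_rect ?Creal_Re ?Creal_Im // -complexRe -complexIm.
by case: z => a b; rewrite -complexiE; simpc.
Qed.

Section ComplexParts.
Variable R : rcfType.
Implicit Types (a : R) (w z : R[i]).

Lemma ReD w z : Re (w + z) = Re w + Re z. Proof. by case: w; case: z. Qed.
Lemma ImD w z : Im (w + z) = Im w + Im z. Proof. by case: w; case: z. Qed.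
Lemma ReN z : Re (- z) = - Re z. Proof. by case: z. Qed.
Lemma ImN z : Im (- z) = - Im z. Proof. by case: z. Qed.
Lemma ReM w z : Re (w * z) = Re w * Re z - Im w * Im z.
Proof. by case: w; case: z. Qed.
Lemma ImM w z : Im (w * z) = Re w * Im z + Im w * Re z.
Proof. by case: w => ? ?; case: z => ? ? /=; rewrite addrC. Qed.
Lemma ReJ z : Re z^* = Re z. Proof. by rewrite conjE; case: z. Qed.
Lemma ImJ z : Im z^* = - Im z. Proof. by rewrite conjE; case: z. Qed.
Lemma Re_nat n : Re (n%:R : R[i]) = n%:R.
Proof. by rewrite -(rmorph_nat (real_complex R)). Qed.
Lemma Im_nat n : Im (n%:R : R[i]) = 0.
Proof. by rewrite -(rmorph_nat (real_complex R)). Qed.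

End ComplexParts.

Section ComplexModulus.
Context {R : realType}.
Implicit Types (r : R) (w z : R[i]).

Lemma cmodE z : (cmod z)%:C%C = `|z|.
Proof. by rewrite normc_def. Qed.

Lemma cmod_ge0 z : 0 <= cmod z.
Proof. exact: sqrtr_ge0. Qed.

Lemma cmod_sqr z : cmod z ^+ 2 = Re z ^+ 2 + Im z ^+ 2.
Proof. by rewrite sqr_sqrtr // addr_ge0 ?sqr_ge0. Qed.

Lemma cmodM w z : cmod (w * z) = cmod w * cmod z.
Proof. by apply: (@complexI R); rewrite rmorphM /= !cmodE normrM. Qed.

Lemma cmodN z : cmod (- z) = cmod z.
Proof. by apply: (@complexI R); rewrite !cmodE normrN. Qed.

Lemma cmod_div w z : cmod (w / z) = cmod w / cmod z.
Proof. by apply: (@complexI R); rewrite rmorphM fmorphV /= !cmodE normf_div. Qed.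

Lemma cmod_real r : cmod r%:C%C = `|r|.
Proof. by rewrite /cmod /= expr0n addr0 sqrtr_sqr. Qed.

Lemma cmod1 : cmod (1 : R[i]) = 1.
Proof. by rewrite -(rmorph1 (real_complex R)) cmod_real normr1. Qed.

Lemma cmod_eq1 z : `|z| = 1 -> cmod z = 1.
Proof. by rewrite -cmodE => /(congr1 (@complex.Re R)). Qed.

Lemma sqr_Re_Im_eq1 z : `|z| = 1 -> Re z ^+ 2 + Im z ^+ 2 = 1.
Proof. by move=> /cmod_eq1 z1; rewrite -cmod_sqr z1 expr1n. Qed.

Lemma Re_le_cmod z : `|Re z| <= cmod z.
Proof. by rewrite -lecR cmodE normc_ge_Re. Qed.

Lemma Im_le_cmod z : `|Im z| <= cmod z.
Proof.
have := Re_le_cmod (z * 'i%C); rewrite ReiNIm normrN cmodM.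
by rewrite /cmod /= expr0n expr1n add0r sqrtr1 mulr1.
Qed.

Lemma cmod_le_ReIm z : cmod z <= `|Re z| + `|Im z|.
Proof.
rewrite -[_ + _]ger0_norm ?addr_ge0 // -sqrtr_sqr; apply: ler_wsqrtr.
rewrite -[Re z ^+ 2]real_normK ?num_real // -[Im z ^+ 2]real_normK ?num_real //.
have := mulr_ge0 (normr_ge0 (Re z)) (normr_ge0 (Im z)); nra.
Qed.

End ComplexModulus.

Local Notation nsq ip x := (complex.Re (ip x x)).

Lemma hnorm_ge0 {R : realType} {V : lmodType R[i]} (ip : V -> V -> R[i]) x :
  0 <= hnorm ip x.
Proof. exact: sqrtr_ge0. Qed.

Section InnerProduct.
Context {R : realType} {V : lmodType R[i]} {ip : V -> V -> R[i]}.
Hypothesis ipP : is_inner_product ip.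
Implicit Types (a b : R[i]) (x y z : V).

Lemma ipDZl a x y z : ip (a *: x + y) z = a * ip x z + ip y z.
Proof. by case: ipP. Qed.

Lemma ip0l z : ip 0 z = 0.
Proof.
have := ipDZl 1 0 0 z; rewrite scaler0 addr0 mul1r -[LHS]addr0.
by move/addrI/esym.
Qed.

Lemma ipDl x y z : ip (x + y) z = ip x z + ip y z.
Proof. by rewrite -[x in LHS]scale1r ipDZl mul1r. Qed.

Lemma ipZl a x z : ip (a *: x) z = a * ip x z.
Proof. by rewrite -[a *: x]addr0 ipDZl ip0l addr0. Qed.

Lemma ipC x y : ip x y = (ip y x)^*.
Proof. by case: ipP. Qed.

Lemma ipDr x y z : ip z (x + y) = ip z x + ip z y.
Proof. by rewrite ipC ipDl rmorphD /= -!ipC. Qed.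

Lemma ipZr a x z : ip z (a *: x) = a^* * ip z x.
Proof. by rewrite ipC ipZl rmorphM /= -!ipC. Qed.

Lemma ip0r z : ip z 0 = 0.
Proof. by rewrite ipC ip0l rmorph0. Qed.

Lemma ipxx_real x : ip x x = (nsq ip x)%:C%C.
Proof.
case: ipP => _ _ /(_ x) + _; case: (ip x x) => a b.
by rewrite lecE /= => /andP[/eqP->].
Qed.

Lemma nsq_ge0 x : 0 <= nsq ip x.
Proof. by case: ipP => _ _ /(_ x) + _; rewrite ipxx_real lecR. Qed.

Lemma nsq_eq0 x : nsq ip x = 0 -> x = 0.
Proof. by case: ipP => _ _ _ ip_eq0 nx0; apply: ip_eq0; rewrite ipxx_real nx0. Qed.

Lemma nsq0 : nsq ip 0 = 0.
Proof. by rewrite ip0l. Qed.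

Lemma nsqDZ a b x y : nsq ip (a *: x + b *: y) =
  cmod a ^+ 2 * nsq ip x + cmod b ^+ 2 * nsq ip y + 2 * Re (a * b^* * ip x y).
Proof.
rewrite ipDl !ipDr !ipZl !ipZr [ip y x]ipC (ipxx_real x) (ipxx_real y) !cmod_sqr.
by rewrite !(ReD, ImD, ReM, ImM, ReJ, ImJ) /=; ring.
Qed.

Lemma nsqZ a x : nsq ip (a *: x) = cmod a ^+ 2 * nsq ip x.
Proof. by rewrite ipZl ipZr (ipxx_real x) cmod_sqr !(ReM, ImM, ReJ, ImJ) /=; ring. Qed.

Lemma hnorm_sqr x : hnorm ip x ^+ 2 = nsq ip x.
Proof. by rewrite sqr_sqrtr // nsq_ge0. Qed.

Lemma hnorm0 : hnorm ip 0 = 0.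
Proof. by rewrite /hnorm nsq0 sqrtr0. Qed.

Lemma hnorm_eq0 x : hnorm ip x = 0 -> x = 0.
Proof. by move=> hx0; apply: nsq_eq0; rewrite -hnorm_sqr hx0 expr0n. Qed.

Lemma hnorm_gt0 x : x != 0 -> 0 < hnorm ip x.
Proof. by move=> x0; rewrite lt0r hnorm_ge0 andbT (contra_neq (@hnorm_eq0 x) x0). Qed.

Lemma hnorm_le x y : nsq ip x <= nsq ip y -> hnorm ip x <= hnorm ip y.
Proof. exact: ler_wsqrtr. Qed.

Lemma Re_ip_le_hnormM x y : Re (ip x y) <= hnorm ip x * hnorm ip y.
Proof.
have [->|x0] := eqVneq x 0; first by rewrite ip0l hnorm0 mul0r.
have [->|y0] := eqVneq y 0; first by rewrite ip0r hnorm0 mulr0.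
have XY_gt0 : 0 < hnorm ip x * hnorm ip y by rewrite mulr_gt0 ?hnorm_gt0.
have := nsq_ge0 ((hnorm ip y)%:C%C *: x + (- hnorm ip x)%:C%C *: y).
rewrite nsqDZ !cmod_real normrN !ger0_norm ?hnorm_ge0 // -!hnorm_sqr.
rewrite !(ReM, ImM, ReJ, ImJ) /=.
move: (Re (ip x y)) XY_gt0 => r; set X := hnorm ip x; set Y := hnorm ip y; nra.
Qed.

Lemma hnormD x y : hnorm ip (x + y) <= hnorm ip x + hnorm ip y.
Proof.
rewrite -[hnorm ip x + _]ger0_norm ?addr_ge0 ?hnorm_ge0 // -sqrtr_sqr.
apply: ler_wsqrtr; have -> : x + y = 1 *: x + 1 *: y by rewrite !scale1r.
rewrite nsqDZ cmod1 -!hnorm_sqr.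
have := Re_ip_le_hnormM x y; rewrite mul1r conjC1 mul1r /=.
set X := hnorm ip x; set Y := hnorm ip y; move: (Re (ip x y)) => r; nra.
Qed.

Lemma hnormZ a x : hnorm ip (a *: x) = cmod a * hnorm ip x.
Proof. by rewrite /hnorm nsqZ sqrtrM ?sqr_ge0 // sqrtr_sqr ger0_norm ?cmod_ge0. Qed.

Lemma hnormN x : hnorm ip (- x) = hnorm ip x.
Proof.
by rewrite -scaleN1r hnormZ -(rmorphN1 (real_complex R)) cmod_real normrN1 mul1r.
Qed.

Lemma hnormBC x y : hnorm ip (x - y) = hnorm ip (y - x).
Proof. by rewrite -hnormN opprB. Qed.

End InnerProduct.

Section ContractionFixpoint.
Context {R : realType} {V : lmodType R[i]} {ip : V -> V -> R[i]}.
Context {F : V -> V} {k : R}.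
Hypotheses (ipP : is_inner_product ip) (ip_cplt : ip_complete ip).
Hypotheses (k_ge0 : 0 <= k) (k_lt1 : k < 1).
Hypothesis F_contr : forall x y, hnorm ip (F x - F y) <= k * hnorm ip (x - y).

Let u n := iter n F 0.
Let d0 := hnorm ip (u 1 - u 0).

Lemma iter_step_le n : hnorm ip (u n.+1 - u n) <= k ^+ n * d0.
Proof.
elim: n => [|n IHn]; first by rewrite mul1r.
apply: le_trans (F_contr _ _) _.
by rewrite exprS -mulrA; apply: ler_wpM2l.
Qed.

Lemma iter_dist_le n j :
  (1 - k) * hnorm ip (u (n + j) - u n) <= d0 * (k ^+ n - k ^+ (n + j)).
Proof.
elim: j => [|j IHj]; first by rewrite addn0 !subrr (hnorm0 ipP) !mulr0.
have -> : u (n + j.+1) - u n = (u (n + j).+1 - u (n + j)) + (u (n + j) - u n).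
  by rewrite addnS addrA subrK.
have k1_ge0 : 0 <= 1 - k by rewrite subr_ge0 ltW.
have := ler_wpM2l k1_ge0 (hnormD ipP (u (n + j).+1 - u (n + j)) (u (n + j) - u n)).
have := ler_wpM2l k1_ge0 (iter_step_le (n + j)).
rewrite addnS exprS; nra.
Qed.

Lemma iter_cauchy e : 0 < e -> exists N, forall m n, (N <= m)%N -> (N <= n)%N ->
  hnorm ip (u m - u n) < e.
Proof.
move=> e_gt0; have d0_ge0 : 0 <= d0 by exact: hnorm_ge0.
have small_gt0 : 0 < e * (1 - k) / (d0 + 1).
  by rewrite divr_gt0 ?mulr_gt0 ?subr_gt0 // ltr_wpDl.
have normk_lt1 : `|k| < 1 by rewrite ger0_norm.
have /cvgrPdist_lt/(_ _ small_gt0) [N _ kN_small] := cvg_expr normk_lt1.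
have dist_lt n j : (N <= n)%N -> hnorm ip (u (n + j) - u n) < e.
  move=> Nn; have := kN_small n Nn; rewrite /= sub0r normrN ger0_norm ?exprn_ge0 //.
  rewrite ltr_pdivlMr ?ltr_wpDl // => kn_lt.
  have := iter_dist_le n j; have := exprn_ge0 (n + j) k_ge0.
  have := exprn_ge0 n k_ge0; have : 0 < 1 - k by rewrite subr_gt0.
  have := hnorm_ge0 ip (u (n + j) - u n); nra.
exists N => m n Nm Nn; have [nm|mn] := leqP n m.
  by rewrite -(subnKC nm); exact: dist_lt.
by rewrite (hnormBC ipP) -(subnKC (ltnW mn)); exact: dist_lt.
Qed.

Lemma contraction_fixpoint : exists x, F x = x.
Proof.
have [l ul] := ip_cplt _ iter_cauchy; exists l.
apply/eqP; rewrite -subr_eq0; apply/eqP/(hnorm_eq0 ipP)/eqP.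
rewrite eq_le hnorm_ge0 andbT.
apply/ler_addgt0Pr => e e_gt0; rewrite add0r.
have [N uNl] : exists N, forall n, (N <= n)%N -> hnorm ip (u n - l) < e / 2.
  by apply: ul; rewrite divr_gt0.
have -> : F l - l = (F l - F (u N)) + (u N.+1 - l) by rewrite addrA subrK.
apply: le_trans (hnormD ipP _ _) _.
have := F_contr l (u N); rewrite [hnorm ip (l - _)](hnormBC ipP).
have := uNl N (leqnn N); have := uNl N.+1 (leqnSn N).
have : k * hnorm ip (u N - l) <= hnorm ip (u N - l) by rewrite ler_piMl ?hnorm_ge0 ?ltW.
lra.
Qed.

End ContractionFixpoint.

Section CoerciveOperator.
Context {R : realType} {V : lmodType R[i]} {ip : V -> V -> R[i]}.
Context {A : V -> V} {m K : R}.
Hypothesis ipP : is_inner_product ip.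
Hypothesis A_sub : forall x y, A (x - y) = A x - A y.
Hypothesis A_coercive : forall x, m * nsq ip x <= Re (ip (A x) x).
Hypothesis m_gt0 : 0 < m.

Lemma coercive_inj : injective A.
Proof.
move=> x y Axy; apply/eqP; rewrite -subr_eq0; apply/eqP/(nsq_eq0 ipP).
have := A_coercive (x - y); rewrite A_sub Axy subrr (ip0l ipP) pmulr_rle0 // => le0.
by apply/eqP; rewrite eq_le le0 nsq_ge0.
Qed.

Hypothesis A_bounded : forall x, nsq ip (A x) <= K * nsq ip x.
Hypothesis m_le_K : m ^+ 2 <= K.

Let K_gt0 : 0 < K.
Proof. by apply: lt_le_trans m_le_K; rewrite exprn_gt0. Qed.

(* The step size minimising 1 - 2 t m + t^2 K. *)
Let t := m / K.
Let k := Num.sqrt (1 - m ^+ 2 / K).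

Let k_lt1 : k < 1.
Proof.
by rewrite /k -[X in _ < X]sqrtr1 ltr_sqrt // ltrBlDr ltrDl divr_gt0 ?exprn_gt0.
Qed.

Lemma coercive_step_contraction x : hnorm ip (x - t%:C%C *: A x) <= k * hnorm ip x.
Proof.
rewrite /k /hnorm -sqrtrM; last by rewrite subr_ge0 ler_pdivrMr // mul1r.
apply: ler_wsqrtr.
have -> : x - t%:C%C *: A x = 1 *: x + (- t)%:C%C *: A x.
  by rewrite scale1r rmorphN scaleNr.
rewrite (nsqDZ ipP) cmod1 cmod_real real_normK ?num_real //.
rewrite [ip x (A x)](ipC ipP) !(ReM, ImM, ReJ, ImJ) /=.
have := A_coercive x; have := A_bounded x; have := nsq_ge0 ipP x.
have t_gt0 : 0 < t by rewrite divr_gt0.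
have -> : m ^+ 2 / K = 2 * t * m - t ^+ 2 * K by rewrite /t; field; rewrite gt_eqF.
nra.
Qed.

Lemma coercive_surj : ip_complete ip -> forall y, exists x, A x = y.
Proof.
move=> ip_cplt y; pose F x := x - t%:C%C *: (A x - y).
have F_contr x x' : hnorm ip (F x - F x') <= k * hnorm ip (x - x').
  have -> : F x - F x' = x - x' - t%:C%C *: ((A x - y) - (A x' - y)).
    by rewrite [in RHS]scalerBr opprD addrACA -opprD.
  by rewrite opprB subrKA -A_sub; exact: coercive_step_contraction.
have [x Fx] := contraction_fixpoint ipP ip_cplt (sqrtr_ge0 _) k_lt1 F_contr.
exists x; apply/eqP; rewrite -subr_eq0; apply/eqP.
move: Fx; rewrite /F -[X in _ = X]addr0 => /addrI/eqP.
by rewrite oppr_eq0 scaler_eq0 (inj_eq (@complexI R)) gt_eqF ?divr_gt0 //= => /eqP.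
Qed.

End CoerciveOperator.

Lemma sqr_dot2_le {R : realFieldType} (a b c d : R) :
  (a * c + b * d) ^+ 2 <= (a ^+ 2 + b ^+ 2) * (c ^+ 2 + d ^+ 2).
Proof. have := sqr_ge0 (a * d - b * c); nra. Qed.

Lemma norm_le_sqr {R : realFieldType} (x y : R) : 0 <= y -> x ^+ 2 <= y ^+ 2 -> `|x| <= y.
Proof.
by move=> y_ge0 xy; rewrite -ler_sqr ?nnegrE ?normr_ge0 // real_normK ?num_real.
Qed.

Definition in_ellipse {R : realType} (delta n : R) (z : R[i]) : Prop :=
  Re z ^+ 2 / (1 + delta) ^+ 2 + Im z ^+ 2 / (1 - delta) ^+ 2 <= n ^+ 2.

Section EllipseBounds.
Context {R : realType} {delta : R} {omega : R[i]}.
Hypotheses (delta01 : 0 < delta < 1) (omega1 : `|omega| = 1).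
Implicit Types (n : R) (z : R[i]).

Let omega_sqr : Re omega ^+ 2 + Im omega ^+ 2 = 1 := sqr_Re_Im_eq1 _ omega1.

Lemma G_delta_in_ellipse z : G_delta delta z -> in_ellipse delta 1 z.
Proof. by rewrite /in_ellipse expr1n => /ltW. Qed.

Lemma in_ellipse_Re_mul n z : 0 <= n -> in_ellipse delta n z ->
  `|Re (omega * z)| <= (1 + delta) * n.
Proof.
rewrite /in_ellipse -!expr_div_n => n_ge0 zn; case/andP: delta01 => d_gt0 d_lt1.
apply: norm_le_sqr; first by rewrite mulr_ge0 //; lra.
have := sqr_dot2_le ((1 + delta) * Re omega) (- ((1 - delta) * Im omega))
  (Re z / (1 + delta)) (Im z / (1 - delta)).
have -> : (1 + delta) * Re omega * (Re z / (1 + delta)) +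
    - ((1 - delta) * Im omega) * (Im z / (1 - delta)) = Re (omega * z).
  by rewrite ReM; field; apply/andP; split; rewrite lt0r_neq0 //; lra.
have : ((1 + delta) * Re omega) ^+ 2 + (- ((1 - delta) * Im omega)) ^+ 2
    <= (1 + delta) ^+ 2.
  have p2 : Re omega ^+ 2 = 1 - Im omega ^+ 2 by rewrite -omega_sqr addrK.
  rewrite sqrrN !exprMn p2; have := mulr_ge0 (ltW d_gt0) (sqr_ge0 (Im omega)); nra.
have := sqr_ge0 (Re z / (1 + delta)); have := sqr_ge0 (Im z / (1 - delta)).
rewrite exprMn; nra.
Qed.

Lemma in_ellipse_support n z : 0 <= n -> in_ellipse delta n z ->
  Re (omega * z) - delta * Re (omega * z^*) <= (1 - delta ^+ 2) * n.
Proof.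
rewrite /in_ellipse -!expr_div_n => n_ge0 zn; case/andP: delta01 => d_gt0 d_lt1.
have dd_ge0 : 0 <= 1 - delta ^+ 2 by rewrite subr_ge0 expr_le1 ?ltW.
apply: ler_normlW; apply: norm_le_sqr; first exact: mulr_ge0.
have := sqr_dot2_le ((1 - delta ^+ 2) * Re omega) (- ((1 - delta ^+ 2) * Im omega))
  (Re z / (1 + delta)) (Im z / (1 - delta)).
have -> : (1 - delta ^+ 2) * Re omega * (Re z / (1 + delta)) +
    - ((1 - delta ^+ 2) * Im omega) * (Im z / (1 - delta)) =
    Re (omega * z) - delta * Re (omega * z^*).
  by rewrite !ReM ReJ ImJ; field; apply/andP; split; rewrite lt0r_neq0 //; lra.
have -> : ((1 - delta ^+ 2) * Re omega) ^+ 2 + (- ((1 - delta ^+ 2) * Im omega)) ^+ 2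
    = (1 - delta ^+ 2) ^+ 2 by rewrite sqrrN !exprMn -mulrDr omega_sqr mulr1.
have := ler_wpM2l (sqr_ge0 (1 - delta ^+ 2)) zn; rewrite exprMn; lra.
Qed.

End EllipseBounds.

Section PsiOperator.
Context {R : realType} {delta : R} {V : lmodType R[i]} {ip : V -> V -> R[i]}.
Context {T : V -> V} {omega : R[i]}.
Hypotheses (ipP : is_inner_product ip) (T_lin : linear T).
Hypotheses (delta01 : 0 < delta < 1) (omega1 : `|omega| = 1).
Hypothesis W_in_G : forall x, hnorm ip x = 1 -> G_delta delta (ip (T x) x).

Let TL : {linear V -> V} := HB.pack T (GRing.isLinear.Build _ _ _ _ T T_lin).
Let T0 : T 0 = 0 := linear0 TL.
Let TZ a x : T (a *: x) = a *: T x := linearZZ TL a x.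
Let TB x y : T (x - y) = T x - T y := linearB TL x y.

Lemma ip_T_in_ellipse x : in_ellipse delta (nsq ip x) (ip (T x) x).
Proof.
have [->|x0] := eqVneq x 0.
  by rewrite T0 (ip0l ipP) /in_ellipse /= expr0n /= !mul0r addr0 lexx.
set s := (hnorm ip x)^-1.
have s_gt0 : 0 < s by rewrite invr_gt0 hnorm_gt0.
have ssN : s ^+ 2 * nsq ip x = 1.
  by rewrite -(hnorm_sqr ipP) -exprMn /s mulVf ?expr1n // gt_eqF ?hnorm_gt0.
have sx1 : hnorm ip (s%:C%C *: x) = 1.
  by rewrite (hnormZ ipP) cmod_real (ger0_norm (ltW s_gt0)) /s mulVf ?gt_eqF ?hnorm_gt0.
have := W_in_G _ sx1; rewrite TZ (ipZl ipP) (ipZr ipP) conjE conjc_real.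
have -> : s%:C%C * (s%:C%C * ip (T x) x) = (s ^+ 2)%:C%C * ip (T x) x.
  by rewrite mulrA -rmorphM expr2.
rewrite /G_delta /in_ellipse /= !(ReM, ImM) /= !mul0r subr0 addr0 => /ltW.
set c := Re _; set d := Im _; set E := c ^+ 2 / _ + _.
have -> : (s ^+ 2 * c) ^+ 2 / (1 + delta) ^+ 2 + (s ^+ 2 * d) ^+ 2 / (1 - delta) ^+ 2
    = (s ^+ 2) ^+ 2 * E by rewrite /E; ring.
move=> sE.
have -> : E = nsq ip x ^+ 2 * ((s ^+ 2) ^+ 2 * E).
  by rewrite mulrA -exprMn [nsq ip x * _]mulrC ssN expr1n mul1r.
by rewrite ler_piMr ?sqr_ge0.
Qed.

(* [Psi_op delta omega T] is [num_op] composed with the inverse of [den_op]. *)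
Definition den_op x := 2 *: x - omega *: T x.
Definition num_op x := (2 * omega * delta%:C%C) *: x - T x.

Let omega_cmod : cmod omega = 1.
Proof. exact: cmod_eq1. Qed.

Lemma nsq_den_op x : nsq ip (den_op x) =
  4 * nsq ip x - 4 * Re (omega * ip (T x) x) + nsq ip (T x).
Proof.
rewrite /den_op -scaleNr -[2 *: x]/((2%:R : R[i]) *: x) -(rmorph_nat (real_complex R)).
rewrite (nsqDZ ipP) cmod_real ger0_norm // cmodN omega_cmod [ip x (T x)](ipC ipP).
by rewrite !(ReM, ImM, ReJ, ImJ, ReN, ImN) /=; ring.
Qed.

Lemma nsq_num_op x : nsq ip (num_op x) =
  4 * delta ^+ 2 * nsq ip x - 4 * delta * Re (omega * (ip (T x) x)^*) + nsq ip (T x).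
Proof.
have -> : num_op x = (2 * omega * delta%:C%C) *: x + (-1) *: T x by rewrite scaleN1r.
rewrite (nsqDZ ipP) !cmodM cmodN cmod1 omega_cmod cmod_real ger0_norm; last first.
  by case/andP: delta01 => /ltW.
rewrite -(rmorph_nat (real_complex R)) cmod_real ger0_norm // [ip x (T x)](ipC ipP).
by rewrite !(ReM, ImM, ReJ, ImJ, ReN, ImN) /=; ring.
Qed.

Lemma hnorm_num_op_le x : hnorm ip (num_op x) <= hnorm ip (den_op x).
Proof.
apply: hnorm_le; rewrite nsq_den_op nsq_num_op.
have := in_ellipse_support delta01 omega1 _ _ (nsq_ge0 ipP x) (ip_T_in_ellipse x); lra.
Qed.

Lemma den_op_coercive x : (1 - delta) * nsq ip x <= Re (ip (den_op x) x).
Proof.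
rewrite /den_op (ipDl ipP) -scaleNr !(ipZl ipP) (ipxx_real ipP).
rewrite !(ReD, ReM, ImM, ReN, ImN) /=.
have := in_ellipse_Re_mul delta01 omega1 _ _ (nsq_ge0 ipP x) (ip_T_in_ellipse x).
rewrite ReM ler_norml => /andP[_]; lra.
Qed.

Context {M : R}.
Hypothesis T_bounded : forall x, hnorm ip (T x) <= M * hnorm ip x.

Lemma den_op_bounded x : nsq ip (den_op x) <= (12 + M ^+ 2) * nsq ip x.
Proof.
rewrite nsq_den_op.
have := in_ellipse_Re_mul delta01 omega1 _ _ (nsq_ge0 ipP x) (ip_T_in_ellipse x).
rewrite ler_norml => /andP[+ _].
have : nsq ip (T x) <= M ^+ 2 * nsq ip x.
  rewrite -!(hnorm_sqr ipP) -exprMn ler_sqr ?nnegrE ?hnorm_ge0 //.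
  exact: le_trans (hnorm_ge0 _ _) (T_bounded x).
have := nsq_ge0 ipP x; case/andP: delta01; nra.
Qed.

Lemma den_op_sub x y : den_op (x - y) = den_op x - den_op y.
Proof. by rewrite /den_op TB !scalerBr opprD addrACA -opprD. Qed.

Hypothesis ip_cplt : ip_complete ip.

Let one_sub_delta_gt0 : 0 < 1 - delta.
Proof. by case/andP: delta01 => _; rewrite subr_gt0. Qed.

Lemma den_op_surj y : exists x, den_op x = y.
Proof.
apply: (coercive_surj ipP den_op_sub den_op_coercive one_sub_delta_gt0 den_op_bounded)=> //.
by case/andP: delta01 => d_gt0 d_lt1; have := sqr_ge0 M; nra.
Qed.

Let den_inv y := xget 0 [set x | den_op x = y].

Lemma den_invK y : den_op (den_inv y) = y.
Proof. exact: (@xgetPex _ 0 [set x | den_op x = y] (den_op_surj y)). Qed.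

Lemma resolvent_ok_den_op : resolvent_ok omega T.
Proof.
exists den_inv => [x|y]; last exact: den_invK.
by apply: (coercive_inj ipP den_op_sub den_op_coercive one_sub_delta_gt0); rewrite den_invK.
Qed.

Lemma opnorm_Psi_op_le1 : (opnorm ip (Psi_op delta omega T) <= 1%:E)%E.
Proof.
apply: ge_ereal_sup => _ [y y_le1 <-]; rewrite lee_fin.
by apply: le_trans (hnorm_num_op_le _) _; rewrite den_invK.
Qed.
End PsiOperator.


Lemma admissible_Psi_op_le1 {R : realType} {delta : R} {V : lmodType R[i]}
    {ip : V -> V -> R[i]} {T : V -> V} {omega : R[i]} :
  0 < delta < 1 -> admissible delta ip T -> `|omega| = 1 ->
  resolvent_ok omega T /\ (opnorm ip (Psi_op delta omega T) <= 1%:E)%E.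
Proof.
move=> delta01 [[ipP ip_cplt] T_lin [M T_bounded] W_cl] omega1.
have W_in_G x : hnorm ip x = 1 -> G_delta delta (ip (T x) x).
  by move=> x1; apply: W_cl; apply: subset_closure; exists x.
split; first exact: (resolvent_ok_den_op ipP T_lin delta01 omega1 W_in_G T_bounded ip_cplt).
exact: (opnorm_Psi_op_le1 ipP T_lin delta01 omega1 W_in_G T_bounded ip_cplt).
Qed.

Lemma real_cauchy_lim (R : realType) (u : nat -> R) :
  (forall e, 0 < e -> exists N, forall m n, (N <= m)%N -> (N <= n)%N -> `|u m - u n| < e) ->
  exists l, forall e, 0 < e -> exists N, forall n, (N <= n)%N -> `|u n - l| < e.
Proof.
move=> u_cauchy; have /cvgrPdist_lt u_cvg : cvg (u @ \oo).
  apply: cauchy_cvg; apply: cauchy_exP => e e_gt0; have [N uN] := u_cauchy e e_gt0.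
  by exists (u N), N => // n /= Nn; rewrite /ball /= uN.
exists (lim (u @ \oo)) => e e_gt0; have [N _ uN] := u_cvg e e_gt0.
by exists N => n Nn; rewrite distrC; exact: uN.
Qed.


Section ScalarModel.
Context {R : realType}.
Implicit Types (c lam omega : R[i]) (delta : R).

Definition cip (x y : R[i]^o) : R[i] := x * y^*.

Lemma cip_inner_product : is_inner_product cip.
Proof.
split=> [a x y z|x y|x|x /eqP]; rewrite /cip.
- by rewrite mulrDl mulrA.
- by rewrite rmorphM /= conjCK mulrC.
- exact: mul_conjC_ge0.
- by rewrite mul_conjC_eq0 => /eqP.
Qed.

Lemma hnorm_cip z : hnorm cip z = cmod z.
Proof.
by rewrite /hnorm /cip conjE; case: z => a b; rewrite /cmod /=; simpc; rewrite /= !expr2.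
Qed.

Lemma cip_complete : ip_complete cip.
Proof.
move=> u u_cauchy.
have part_lim (f : R[i] -> R) : (forall z, `|f z| <= cmod z) -> {morph f : x y / x - y} ->
    exists l, forall e, 0 < e -> exists N, forall n, (N <= n)%N -> `|f (u n) - l| < e.
  move=> f_le fB; apply: real_cauchy_lim => e e_gt0; have [N uN] := u_cauchy e e_gt0.
  by exists N => m n Nm Nn; rewrite -fB; apply: le_lt_trans (f_le _) _; rewrite -hnorm_cip uN.
have [lr Re_lim] := part_lim _ (@Re_le_cmod R) (raddfB (@Re R)).
have [li Im_lim] := part_lim _ (@Im_le_cmod R) (raddfB (@Im R)).
exists (lr +i* li)%C => e e_gt0.
have e2_gt0 : 0 < e / 2 by rewrite divr_gt0.
have [N1 N1P] := Re_lim _ e2_gt0; have [N2 N2P] := Im_lim _ e2_gt0.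
exists (maxn N1 N2) => n; rewrite geq_max => /andP[N1n N2n].
rewrite hnorm_cip; apply: le_lt_trans (cmod_le_ReIm _) _; rewrite (splitr e).
by rewrite ltrD ?(raddfB (@Re R)) ?(raddfB (@Im R)) ?N1P ?N2P.
Qed.

Definition mul_op c (x : R[i]^o) : R[i]^o := c * x.

Lemma opnorm_mul_op c : opnorm cip (mul_op c) = (cmod c)%:E.
Proof.
apply/eqP; rewrite eq_le; apply/andP; split.
  apply: ge_ereal_sup => _ [y /= y_le1 <-]; rewrite lee_fin hnorm_cip cmodM.
  by rewrite ler_piMr ?cmod_ge0 // -hnorm_cip.
by apply: ereal_sup_ubound; exists 1; rewrite /= hnorm_cip ?cmod1 // /mul_op mulr1.
Qed.

Lemma mul_op_admissible delta lam : G_delta delta lam -> admissible delta cip (mul_op lam).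
Proof.
move=> lam_G; split.
- exact: (conj cip_inner_product cip_complete).
- by move=> a x y; rewrite /mul_op mulrDr mulrCA.
- by exists (cmod lam) => x; rewrite !hnorm_cip cmodM.
have W_lam : (numrange cip (mul_op lam) : set R[i]^o) `<=` [set lam].
  move=> _ [x /= x1 <-]; rewrite /cip /mul_op -mulrA -[x * _]/(cip x x).
  by rewrite (ipxx_real cip_inner_product) -(hnorm_sqr cip_inner_product) x1 expr1n mulr1.
have lam_closed : closed ([set lam] : set R[i]^o).
  by apply: compact_closed; [exact: norm_hausdorff | exact: compact_set1].
by move=> z /(closureS W_lam); rewrite -(closure_id _).1 // => ->.
Qed.

Lemma Psi_den_neq0 {delta omega lam} : 0 < delta < 1 -> `|omega| = 1 ->
  G_delta delta lam -> 2 - omega * lam != 0.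
Proof.
move=> delta01 omega1 /G_delta_in_ellipse lam_G; rewrite subr_eq0; apply/eqP => two_eq.
have := in_ellipse_Re_mul delta01 omega1 _ _ ler01 lam_G.
rewrite -two_eq mulr1 -(rmorph_nat (real_complex R)) /= normr_nat.
by case/andP: delta01; lra.
Qed.

Lemma Psi_op_mul_op delta omega lam : 2 - omega * lam != 0 ->
  Psi_op delta omega (mul_op lam) = mul_op (Psi delta omega lam).
Proof.
move=> den_neq0; apply: funext => y; rewrite /Psi_op /Psi /mul_op /=.
have scaleE (a : R[i]) (z : R[i]^o) : a *: z = a * z by [].
set x := xget _ _; have : 2 *: x - omega *: (lam * x) = y.
  apply: (@xgetPex _ 0 [set x : R[i]^o | 2 *: x - omega *: (lam * x) = y]).
  by exists (y / (2 - omega * lam)); rewrite /= !scaleE; field.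
by rewrite !scaleE => <-; field.
Qed.

End ScalarModel.

Section PsiNearBoundary.
Context {R : realType} {delta : R} {omega : R[i]}.
Hypotheses (delta01 : 0 < delta < 1) (omega1 : `|omega| = 1).

Let omega_sqr : Re omega ^+ 2 + Im omega ^+ 2 = 1 := sqr_Re_Im_eq1 _ omega1.

(* At r = 1 this is the point of the boundary of G_delta where [in_ellipse_support]
   is an equality. *)
Definition boundary_ray (r : R) : R[i] :=
  ((r * (1 + delta) * Re omega) -i* (r * (1 - delta) * Im omega))%C.

Lemma boundary_ray_in_G r : 0 <= r < 1 -> G_delta delta (boundary_ray r).
Proof.
case/andP: delta01 => d_gt0 d_lt1 /andP[r_ge0 r_lt1]; rewrite /G_delta /=.
have -> : (r * (1 + delta) * Re omega) ^+ 2 / (1 + delta) ^+ 2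
    + (- (r * (1 - delta) * Im omega)) ^+ 2 / (1 - delta) ^+ 2
    = r ^+ 2 * (Re omega ^+ 2 + Im omega ^+ 2).
  by field; apply/andP; split; rewrite lt0r_neq0 //; lra.
by rewrite omega_sqr mulr1 expr_lt1.
Qed.

Lemma boundary_ray_den_ge r : 0 <= r < 1 -> 1 - delta <= cmod (2 - omega * boundary_ray r).
Proof.
case/andP: delta01 => d_gt0 d_lt1 /andP[r_ge0 r_lt1].
apply: le_trans (Re_le_cmod _); apply: le_trans (ler_norm _).
rewrite ReD ReN ReM Re_nat /=.
have := congr1 (fun s => r * (1 + delta) * s) omega_sqr.
have := mulr_ge0 (mulr_ge0 r_ge0 (ltW d_gt0)) (sqr_ge0 (Im omega)).
have : 0 <= delta * (1 - r) by rewrite mulr_ge0 ?subr_ge0 ?ltW.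
lra.
Qed.

Lemma boundary_ray_gap r :
  cmod (2 * omega * delta%:C%C - boundary_ray r) ^+ 2 =
  cmod (2 - omega * boundary_ray r) ^+ 2 - 4 * (1 - delta ^+ 2) * (1 - r).
Proof.
apply/eqP; rewrite -subr_eq0; apply/eqP; rewrite !cmod_sqr.
rewrite !(ReD, ImD, ReN, ImN, ReM, ImM, Re_nat, Im_nat) /=.
transitivity ((1 - (Re omega ^+ 2 + Im omega ^+ 2)) * ((r * (1 + delta) * Re omega) ^+ 2
  + (r * (1 - delta) * Im omega) ^+ 2 - 4 * delta ^+ 2 - 4 * (1 - delta ^+ 2) * r)).
  by ring.
by rewrite omega_sqr subrr mul0r.
Qed.

Lemma sup_Psi_G_ge1 : (1%:E <= sup_Psi_G delta omega)%E.
Proof.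
apply/lee_subgt0Pr => e e_gt0; rewrite -EFinB; case/andP: delta01 => d_gt0 d_lt1.
have [e_ge1|e_lt1] := leP 1 e.
  apply: le_trans (@ereal_sup_ubound _ _ (cmod (Psi delta omega 0))%:E _).
    by rewrite lee_fin (le_trans _ (cmod_ge0 _)) // subr_le0.
  by exists 0 => //; rewrite /G_delta /= expr0n /= !mul0r addr0 ltr01.
pose r := 1 - e * (1 - delta) / (4 * (1 + delta)).
have r01 : 0 <= r < 1.
  rewrite /r subr_ge0 ltrBlDr ltrDl ler_pdivrMr ?divr_gt0 ?mulr_gt0 //; try lra.
  by rewrite mul1r; nra.
apply: le_trans (@ereal_sup_ubound _ _ (cmod (Psi delta omega (boundary_ray r)))%:E _); last first.
  by exists (boundary_ray r) => //; exact: boundary_ray_in_G.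
rewrite lee_fin /Psi cmod_div.
have A_ge := boundary_ray_den_ge _ r01; have gap := boundary_ray_gap r.
set A := cmod (2 - _) in A_ge gap *; set B := cmod (_ - boundary_ray r) in gap *.
have gapE : 4 * (1 - delta ^+ 2) * (1 - r) = e * (1 - delta) ^+ 2.
  by rewrite /r; field; lra.
rewrite ler_pdivlMr; last by lra.
apply: ler_normlW; apply: norm_le_sqr; first exact: cmod_ge0.
have : (1 - delta) ^+ 2 <= A ^+ 2 by rewrite ler_sqr ?nnegrE; lra.
have e1_ge0 : 0 <= 1 - e by rewrite subr_ge0 ltW.
have := mulr_ge0 (mulr_ge0 (ltW e_gt0) e1_ge0) (sqr_ge0 A).
rewrite gap gapE exprMn; nra.
Qed.

End PsiNearBoundary.

Theorem lemma4p3 (R : realType) (delta : R) (hdelta : 0 < delta < 1) :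
  (forall (V : lmodType R[i]) (ip : V -> V -> R[i]) (T : V -> V),
     admissible delta ip T ->
     forall omega : R[i], `|omega| = 1 ->
       resolvent_ok omega T /\
       (opnorm ip (Psi_op delta omega T) <= 1%:E)%E) /\
  (forall omega : R[i], `|omega| = 1 ->
     bfd_norm_Psi delta omega = 1%:E /\ 1%:E = sup_Psi_G delta omega).
Proof.
split=> [V ip T adm omega omega1|omega omega1]; first exact: admissible_Psi_op_le1.
have bfd_le1 : (bfd_norm_Psi delta omega <= 1%:E)%E.
  apply: ge_ereal_sup => _ [V [ip [T [adm ->]]]].
  by case: (admissible_Psi_op_le1 hdelta adm omega1).
have sup_le_bfd : (sup_Psi_G delta omega <= bfd_norm_Psi delta omega)%E.
  apply: ereal_sup_le => _ [lam lam_G <-].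
  exists (R[i]^o), (@cip R), (mul_op lam); split; first exact: mul_op_admissible.
  by rewrite Psi_op_mul_op ?opnorm_mul_op // (Psi_den_neq0 hdelta omega1 lam_G).
have one_le_sup := sup_Psi_G_ge1 hdelta omega1.
split; apply/eqP; rewrite eq_le.
  by rewrite bfd_le1 (le_trans one_le_sup sup_le_bfd).
by rewrite one_le_sup (le_trans sup_le_bfd bfd_le1).
Qed.
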